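(* Let $M>0$, $\beta^*>0$, and let $g$ be the log-normal density $g(t)=\frac{1}{t\sigma\sqrt{2\pi}}\exp\!\big(-\frac{(\ln t-\mu)^2}{2\sigma^2}\big)$ for $t>0$, $g(t)=0$ for $t\le0$ ($\mu\in\mathbb{R}$, $\sigma>0$). Let $I$ be the unique $C^1$ solution on $[0,\infty)$ of \[ I'(t)=\beta^*(M-I(t))\Big(I(t)-\int_0^t g(t-s)I(s)\,ds\Big),\qquad I(0)=I_0\in[0,M]. \] Then the limit $I_\infty:=\lim_{t\to\infty}I(t)$ exists in $\mathbb{R}$. *)

From Stdlib Require Import Reals Lra.
From Coquelicot Require Import Coquelicot.
Open Scope R_scope.

Definition lognormal (mu sigma : R) (t : R) : R :=
  if Rlt_dec 0 t then
    / (t * sigma * sqrt (2 * PI)) * exp (- (ln t - mu) ^ 2 / (2 * sigma ^ 2))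
  else 0.

Definition C1_on_nonneg (f f' : R -> R) : Prop :=
  (forall t, 0 < t -> is_derive f t (f' t)) /\
  filterlim (fun h => (f h - f 0) / h) (at_right 0) (locally (f' 0)) /\
  (forall t, 0 < t -> continuous f' t) /\
  filterlim f' (at_right 0) (locally (f' 0)).

Definition is_solution (beta M I0 : R) (g : R -> R) (I : R -> R) : Prop :=
  exists I' : R -> R,
    C1_on_nonneg I I' /\
    I 0 = I0 /\
    forall t, 0 <= t ->
      I' t = beta * (M - I t) * (I t - RInt (fun s => g (t - s) * I s) 0 t).

(* A solution stays in [[0, M]] and is nondecreasing, hence converges.
   Monotonicity propagates by real induction: while [I] is nondecreasing on
   [[0, t]], the memory term is at most [I t] times the mass [\int_0^t g < 1],
   so [I' t > 0] as soon as [0 < I t < M]; the boundary values [0] and [M]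
   persist for a while by a Gronwall-type uniqueness argument on short
   intervals.  Through the log-normal distribution function, the mass bound
   reduces to [\int_0^x exp (-u^2) du < sqrt PI / 2], obtained by Feynman's
   trick. *)

From Stdlib Require Import Reals Lra Classical.
From Coquelicot Require Import Coquelicot.
Open Scope R_scope.

Ltac continuous_by_derive :=
  apply (@ex_derive_continuous R_AbsRing R_NormedModule); auto_derive.

Lemma ex_RInt_of_continuous (f : R -> R) a b : (forall x, continuous f x) -> ex_RInt f a b.
Proof. intros Hf; apply (ex_RInt_continuous (V := R_CompleteNormedModule)); intros; apply Hf. Qed.

Definition gauss (x : R) : R := exp (- (x * x)).

Definition gauss_int (x : R) : R := RInt gauss 0 x.

Lemma continuous_gauss x : continuous gauss x.
Proof. unfold gauss; continuous_by_derive; auto. Qed.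

Lemma ex_RInt_gauss a b : ex_RInt gauss a b.
Proof. apply ex_RInt_of_continuous, continuous_gauss. Qed.

Lemma is_derive_gauss_int x : is_derive gauss_int x (gauss x).
Proof.
  apply is_derive_RInt with 0.
  - apply filter_forall; intros b.
    apply (RInt_correct (V := R_CompleteNormedModule)), ex_RInt_gauss.
  - apply continuous_gauss.
Qed.

(* Feynman's trick: [gauss_int x ^ 2 + feynman x] has derivative zero, and
   [feynman 0 = atan 1]. *)
Definition feynman_integrand (x t : R) : R := exp (- (x * x) * (1 + t * t)) / (1 + t * t).

Definition feynman (x : R) : R := RInt (feynman_integrand x) 0 1.

Lemma one_plus_sqr_pos t : 0 < 1 + t * t.
Proof. nra. Qed.

Lemma Derive_feynman_integrand x t :
  Derive (fun z => feynman_integrand z t) x = -2 * x * exp (- (x * x) * (1 + t * t)).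
Proof.
  pose proof (one_plus_sqr_pos t).
  apply is_derive_unique; unfold feynman_integrand; auto_derive; [lra | field; lra].
Qed.

Lemma ex_RInt_feynman_integrand x a b : ex_RInt (feynman_integrand x) a b.
Proof.
  apply ex_RInt_of_continuous; intros t; pose proof (one_plus_sqr_pos t).
  unfold feynman_integrand; continuous_by_derive; lra.
Qed.

Lemma continuity_2d_Derive_feynman_integrand x t :
  continuity_2d_pt (fun u v => Derive (fun z => feynman_integrand z v) u) x t.
Proof.
  apply continuity_2d_pt_ext with (fun u v => -2 * u * exp (- (u * u) * (1 + v * v))).
  { intros; rewrite Derive_feynman_integrand; reflexivity. }
  apply continuity_2d_pt_mult.
  - apply continuity_2d_pt_mult; [apply continuity_2d_pt_const | apply continuity_2d_pt_id1].
  - apply continuity_1d_2d_pt_comp with (f := exp).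
    + apply continuity_pt_filterlim; continuous_by_derive; auto.
    + repeat first [ apply continuity_2d_pt_mult | apply continuity_2d_pt_opp
                   | apply continuity_2d_pt_plus | apply continuity_2d_pt_const
                   | apply continuity_2d_pt_id1 | apply continuity_2d_pt_id2 ].
Qed.

Lemma is_derive_feynman x : is_derive feynman x (-2 * gauss x * gauss_int x).
Proof.
  replace (-2 * gauss x * gauss_int x)
    with (RInt (fun t => Derive (fun u => feynman_integrand u t) x) 0 1).
  2:{ rewrite (RInt_ext _ (fun t => scal (-2 * gauss x) (scal x (gauss (x * t + 0))))).
    - apply is_RInt_unique, (is_RInt_scal (V := R_NormedModule)).
      apply (is_RInt_comp_lin (V := R_NormedModule)).
      rewrite Rmult_0_r, Rmult_1_r, !Rplus_0_r.
      apply (RInt_correct (V := R_CompleteNormedModule)), ex_RInt_gauss.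
    - intros t _; rewrite Derive_feynman_integrand.
      unfold gauss, scal; simpl; unfold mult; simpl.
      replace (- (x * x) * (1 + t * t)) with (- (x * x) + - ((x * t + 0) * (x * t + 0))) by ring.
      rewrite exp_plus; ring. }
  apply is_derive_RInt_param.
  - apply filter_forall; intros u t _; pose proof (one_plus_sqr_pos t).
    unfold feynman_integrand; auto_derive; lra.
  - intros t _; apply continuity_2d_Derive_feynman_integrand.
  - apply filter_forall; intros u; apply ex_RInt_feynman_integrand.
Qed.

Lemma feynman_0 : feynman 0 = PI / 4.
Proof.
  unfold feynman; rewrite (RInt_ext _ (fun t => / (1 + t ^ 2))).
  2:{ intros t _; pose proof (one_plus_sqr_pos t); unfold feynman_integrand.
      rewrite Rmult_0_r, Ropp_0, Rmult_0_l, exp_0, Rdiv_1_l; simpl.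
      rewrite Rmult_1_r; reflexivity. }
  replace (PI / 4) with (atan 1 - atan 0) by (rewrite atan_0, atan_1; ring).
  apply is_RInt_unique, (is_RInt_derive atan (fun t => / (1 + t ^ 2))).
  - intros t _; apply is_derive_Reals, derivable_pt_lim_atan.
  - intros t _; pose proof (one_plus_sqr_pos t); continuous_by_derive; nra.
Qed.

Lemma feynman_ge0 x : 0 <= feynman x.
Proof.
  apply RInt_ge_0; [lra | apply ex_RInt_feynman_integrand |].
  intros t _; pose proof (one_plus_sqr_pos t); pose proof (exp_pos (- (x * x) * (1 + t * t))).
  unfold feynman_integrand; apply Rlt_le, Rdiv_lt_0_compat; lra.
Qed.

Lemma gauss_int_sqr_add_feynman x : gauss_int x * gauss_int x + feynman x = PI / 4.
Proof.
  set (h := fun y => gauss_int y * gauss_int y + feynman y).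
  assert (Dh : forall y, is_derive h y 0).
  { intros y; unfold h.
    replace 0 with (gauss y * gauss_int y + gauss_int y * gauss y + -2 * gauss y * gauss_int y)
      by ring.
    apply (is_derive_plus (K := R_AbsRing) (V := R_NormedModule)); [|apply is_derive_feynman].
    apply (is_derive_mult gauss_int gauss_int); try apply is_derive_gauss_int.
    intros; apply Rmult_comm. }
  destruct (MVT_gen h 0 x (fun _ => 0)) as [c [_ Hc]].
  - intros; apply Dh.
  - intros; apply continuity_pt_filterlim, (ex_derive_continuous (V := R_NormedModule)).
    eexists; apply Dh.
  - change (h x = PI / 4); rewrite <- feynman_0.
    replace (feynman 0) with (h 0); [lra|].
    unfold h, gauss_int; rewrite RInt_point; unfold zero; simpl; ring.
Qed.

Lemma Rabs_gauss_int_le x : Rabs (gauss_int x) <= sqrt PI / 2.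
Proof.
  pose proof (gauss_int_sqr_add_feynman x); pose proof (feynman_ge0 x).
  replace (sqrt PI / 2) with (sqrt (PI / 4)).
  - rewrite <- sqrt_Rsqr_abs; apply sqrt_le_1_alt; unfold Rsqr; lra.
  - pose proof PI_RGT_0; rewrite sqrt_div_alt by lra.
    replace 4 with (2 * 2) by ring; rewrite sqrt_square; lra.
Qed.

Lemma gauss_int_lt x : gauss_int x < sqrt PI / 2.
Proof.
  assert (gauss_int x < gauss_int (x + 1)).
  { unfold gauss_int; rewrite <- (RInt_Chasles gauss 0 x (x + 1)) by apply ex_RInt_gauss.
    assert (0 < RInt gauss x (x + 1)); [|unfold plus; simpl; lra].
    apply RInt_gt_0; [lra | intros; apply exp_pos | intros; apply continuous_gauss]. }
  pose proof (Rabs_gauss_int_le (x + 1)); pose proof (Rle_abs (gauss_int (x + 1))); lra.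
Qed.

Section LogNormal.

Variables mu sigma : R.
Hypothesis sigma_pos : 0 < sigma.

Let g := lognormal mu sigma.

Lemma sqrt_2PI_pos : 0 < sqrt (2 * PI).
Proof. apply sqrt_lt_R0; pose proof PI_RGT_0; lra. Qed.

Lemma lognormal_of_pos s : 0 < s ->
  g s = / (s * sigma * sqrt (2 * PI)) * exp (- (ln s - mu) ^ 2 / (2 * sigma ^ 2)).
Proof. intros Hs; unfold g, lognormal; destruct (Rlt_dec 0 s); [reflexivity | lra]. Qed.

Lemma lognormal_of_nonpos s : s <= 0 -> g s = 0.
Proof. intros Hs; unfold g, lognormal; destruct (Rlt_dec 0 s); [lra | reflexivity]. Qed.

Lemma lognormal_ge0 s : 0 <= g s.
Proof.
  destruct (Rlt_le_dec 0 s) as [Hs | Hs]; [| rewrite lognormal_of_nonpos; lra].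
  rewrite lognormal_of_pos by exact Hs; pose proof sqrt_2PI_pos.
  apply Rlt_le, Rmult_lt_0_compat; [apply Rinv_0_lt_compat, Rmult_lt_0_compat | apply exp_pos].
  - apply Rmult_lt_0_compat; lra.
  - exact sqrt_2PI_pos.
Qed.

(* [-a^2 / (2 sigma^2) <= 2 a + 2 sigma^2] (a square is nonnegative) with
   [a = ln s - mu] bounds the exponential factor by [s^2 exp (2 sigma^2 - 2 mu)]. *)
Lemma lognormal_le_linear : exists C, forall s, 0 < s -> g s <= C * s.
Proof.
  pose proof sqrt_2PI_pos.
  exists (exp (2 * sigma ^ 2 - 2 * mu) / (sigma * sqrt (2 * PI))); intros s Hs.
  rewrite lognormal_of_pos by exact Hs.
  set (a := ln s - mu).
  assert (Hexp : exp (- a ^ 2 / (2 * sigma ^ 2)) <= s * s * exp (2 * sigma ^ 2 - 2 * mu)).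
  { replace (s * s * exp (2 * sigma ^ 2 - 2 * mu)) with (exp (2 * a + 2 * sigma ^ 2)).
    - assert (Hle : - a ^ 2 / (2 * sigma ^ 2) <= 2 * a + 2 * sigma ^ 2).
      { apply Rmult_le_reg_r with (2 * sigma ^ 2); [nra |].
        unfold Rdiv; rewrite Rmult_assoc, Rinv_l by nra.
        pose proof (pow2_ge_0 (a + 2 * sigma ^ 2)); nra. }
      destruct Hle as [Hlt | ->]; [left; apply exp_increasing, Hlt | right; reflexivity].
    - replace (2 * a + 2 * sigma ^ 2) with (ln s + ln s + (2 * sigma ^ 2 - 2 * mu))
        by (unfold a; ring).
      rewrite !exp_plus, exp_ln by exact Hs; ring. }
  assert (Hden : 0 < s * sigma * sqrt (2 * PI)) by (apply Rmult_lt_0_compat; nra).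
  apply Rle_trans with (/ (s * sigma * sqrt (2 * PI)) * (s * s * exp (2 * sigma ^ 2 - 2 * mu))).
  - apply Rmult_le_compat_l; [apply Rlt_le, Rinv_0_lt_compat |]; assumption.
  - right; field; split; nra.
Qed.

Lemma continuous_lognormal s : continuous g s.
Proof.
  pose proof sqrt_2PI_pos.
  destruct (Rtotal_order s 0) as [Hs | [-> | Hs]].
  - apply continuous_ext_loc with (fun _ => 0); [| apply continuous_const].
    exists (mkposreal (- s) ltac:(lra)); intros y Hy.
    apply Rabs_lt_between' in Hy; simpl in Hy.
    symmetry; apply lognormal_of_nonpos; lra.
  - destruct lognormal_le_linear as [C HC].
    unfold continuous; rewrite (lognormal_of_nonpos 0) by lra.
    change (filterlim g (locally 0) (Rbar_locally 0)).
    apply (filterlim_le_le (fun _ => 0) g (fun y => C * Rabs y)).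
    + apply filter_forall; intros y; split; [apply lognormal_ge0 |].
      destruct (Rlt_le_dec 0 y) as [Hy | Hy].
      * rewrite Rabs_pos_eq by lra; apply HC, Hy.
      * rewrite lognormal_of_nonpos by exact Hy.
        pose proof (HC 1 Rlt_0_1); pose proof (lognormal_ge0 1); pose proof (Rabs_pos y); nra.
    + apply filterlim_const.
    + replace (Finite 0) with (Finite (C * Rabs 0)) by (rewrite Rabs_R0, Rmult_0_r; reflexivity).
      apply (continuous_mult (fun _ => C) Rabs); [apply continuous_const | apply continuous_Rabs].
  - apply continuous_ext_loc with
      (fun s => / (s * sigma * sqrt (2 * PI)) * exp (- (ln s - mu) ^ 2 / (2 * sigma ^ 2))).
    + exists (mkposreal s Hs); intros y Hy.
      apply Rabs_lt_between' in Hy; simpl in Hy.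
      symmetry; apply lognormal_of_pos; lra.
    + continuous_by_derive; repeat split; try lra; apply Rgt_not_eq;
        repeat apply Rmult_lt_0_compat; lra.
Qed.

Lemma ex_RInt_lognormal a b : ex_RInt g a b.
Proof. apply ex_RInt_of_continuous, continuous_lognormal. Qed.

Definition lognormal_cdf (s : R) : R :=
  / 2 + / sqrt PI * gauss_int ((ln s - mu) / (sigma * sqrt 2)).

Lemma is_derive_lognormal_cdf s : 0 < s -> is_derive lognormal_cdf s (g s).
Proof.
  intros Hs; rewrite lognormal_of_pos by exact Hs.
  assert (Hs2 : 0 < sqrt 2) by (apply sqrt_lt_R0; lra).
  assert (HPI : 0 < sqrt PI) by (apply sqrt_lt_R0, PI_RGT_0).
  set (z := fun s => (ln s - mu) / (sigma * sqrt 2)).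
  assert (Dz : is_derive z s (/ s / (sigma * sqrt 2)))
    by (unfold z; auto_derive; [lra | field; nra]).
  replace (/ (s * sigma * sqrt (2 * PI)) * exp (- (ln s - mu) ^ 2 / (2 * sigma ^ 2)))
    with (plus zero (/ sqrt PI * scal (/ s / (sigma * sqrt 2)) (gauss (z s)))).
  - apply (is_derive_plus (K := R_AbsRing) (V := R_NormedModule));
      [apply (is_derive_const (K := R_AbsRing) (V := R_NormedModule)) | apply is_derive_scal].
    apply (is_derive_comp gauss_int z); [apply is_derive_gauss_int | exact Dz].
  - change (plus zero ?y) with (0 + y); change (scal ?x ?y) with (x * y).
    unfold z, gauss; match goal with |- ?a = ?b => change (@eq R a b) end.
    replace (- ((ln s - mu) / (sigma * sqrt 2) * ((ln s - mu) / (sigma * sqrt 2))))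
      with (- (ln s - mu) ^ 2 / (2 * sigma ^ 2)).
    + rewrite sqrt_mult by (pose proof PI_RGT_0; lra); field; repeat split; lra.
    + replace (2 * sigma ^ 2) with (sigma * sigma * (sqrt 2 * sqrt 2))
        by (rewrite sqrt_sqrt by lra; ring).
      field; lra.
Qed.

Lemma lognormal_cdf_bounds s : 0 <= lognormal_cdf s < 1.
Proof.
  set (x := (ln s - mu) / (sigma * sqrt 2)).
  assert (HPI : 0 < sqrt PI) by (apply sqrt_lt_R0, PI_RGT_0).
  pose proof (gauss_int_lt x); pose proof (Rabs_gauss_int_le x) as Habs.
  apply Rabs_le_between in Habs.
  unfold lognormal_cdf; fold x; split.
  - apply Rmult_le_reg_l with (sqrt PI); [exact HPI |].
    rewrite Rmult_0_r, Rmult_plus_distr_l, <- Rmult_assoc, Rinv_r, Rmult_1_l by lra; lra.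
  - apply Rmult_lt_reg_l with (sqrt PI); [exact HPI |].
    rewrite Rmult_1_r, Rmult_plus_distr_l, <- Rmult_assoc, Rinv_r, Rmult_1_l by lra; lra.
Qed.

(* For [0 < e <= t] the integral over [[e, t]] is
   [lognormal_cdf t - lognormal_cdf e <= lognormal_cdf t]; let [e -> 0+]. *)
Lemma RInt_lognormal_lt_1 t : 0 <= t -> RInt g 0 t < 1.
Proof.
  intros [Ht | <-]; [| rewrite RInt_point; unfold zero; simpl; lra].
  apply Rle_lt_trans with (lognormal_cdf t); [| apply lognormal_cdf_bounds].
  apply (closed_filterlim_loc (F := at_right 0) (fun e => RInt g e t)
           (fun u => u <= lognormal_cdf t)).
  - apply (filterlim_filter_le_1 (F := locally 0)); [apply filter_le_within |].
    apply (continuous_RInt_2 (V := R_NormedModule) g 0 t).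
    apply filter_forall; intros e.
    apply (RInt_correct (V := R_CompleteNormedModule)), ex_RInt_lognormal.
  - exists (mkposreal t Ht); intros e He He0.
    apply Rabs_lt_between' in He; simpl in He.
    rewrite (is_RInt_unique g e t (minus (lognormal_cdf t) (lognormal_cdf e))).
    + pose proof (lognormal_cdf_bounds e); unfold minus, plus, opp; simpl; lra.
    + apply (is_RInt_derive (V := R_CompleteNormedModule)).
      * intros x Hx; rewrite Rmin_left in Hx by lra.
        apply is_derive_lognormal_cdf; lra.
      * intros; apply continuous_lognormal.
  - apply closed_le.
Qed.

End LogNormal.

Lemma real_induction (P : R -> Prop) :
  (forall t, 0 <= t -> (forall s, 0 <= s < t -> P s) ->
     exists d, 0 < d /\ forall s, t <= s < t + d -> P s) ->
  forall t, 0 <= t -> P t.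
Proof.
  intros Hstep t1 Ht1; apply NNPP; intros HP1.
  set (S := fun t => 0 <= t /\ forall s, 0 <= s < t -> P s).
  assert (HS0 : S 0) by (split; [lra | intros; lra]).
  assert (HSb : bound S).
  { exists t1; intros t [Ht HS]; apply Rnot_lt_le; intros Hlt; apply HP1, HS; lra. }
  destruct (completeness S HSb (ex_intro _ 0 HS0)) as [ts [Hub Hlub]].
  assert (Hts : 0 <= ts) by (apply Hub, HS0).
  assert (Hbelow : forall s, 0 <= s < ts -> P s).
  { intros s Hs; apply NNPP; intros HPs.
    assert (Hs_ub : is_upper_bound S s).
    { intros t [Ht HS]; apply Rnot_lt_le; intros Hlt; apply HPs, HS; lra. }
    specialize (Hlub s Hs_ub); lra. }
  destruct (Hstep ts Hts Hbelow) as [d [Hd HPd]].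
  assert (HSd : S (ts + d)).
  { split; [lra |]; intros s Hs.
    destruct (Rlt_le_dec s ts); [apply Hbelow | apply HPd]; lra. }
  specialize (Hub _ HSd); lra.
Qed.

(* [MVT_gen] may return an endpoint, where [df] is unconstrained; it is therefore
   given [df] clamped to the range [df] is known to take inside. *)
Lemma nondecreasing_of_derive_ge0 (f df : R -> R) a b :
  (forall x, a <= x <= b -> continuous f x) ->
  (forall x, a < x < b -> is_derive f x (df x)) ->
  (forall x, a < x < b -> 0 <= df x) ->
  forall x y, a <= x <= y -> y <= b -> f x <= f y.
Proof.
  intros Hcont Hder Hdf x y Hxy Hyb.
  destruct (MVT_gen f x y (fun z => Rmax (df z) 0)) as [c [_ Hc]].
  - intros z Hz; rewrite Rmin_left, Rmax_right in Hz by lra.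
    rewrite Rmax_left by (apply Hdf; lra); apply Hder; lra.
  - intros z Hz; rewrite Rmin_left, Rmax_right in Hz by lra.
    apply continuity_pt_filterlim, Hcont; lra.
  - pose proof (Rmax_r (df c) 0); nra.
Qed.

Lemma Rabs_sub_le_of_derive_bound (f df : R -> R) a b K :
  a <= b ->
  (forall x, a <= x <= b -> continuous f x) ->
  (forall x, a < x < b -> is_derive f x (df x)) ->
  (forall x, a < x < b -> Rabs (df x) <= K) ->
  Rabs (f b - f a) <= K * (b - a).
Proof.
  intros [Hab | <-] Hcont Hder HK; [| rewrite !Rminus_diag, Rabs_R0; lra].
  assert (HK0 : 0 <= K).
  { pose proof (HK ((a + b) / 2) ltac:(lra)); pose proof (Rabs_pos (df ((a + b) / 2))); lra. }
  destruct (MVT_gen f a b (fun z => Rmax (- K) (Rmin (df z) K))) as [c [_ Hc]].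
  - intros z Hz; rewrite Rmin_left, Rmax_right in Hz by lra.
    pose proof (HK z Hz) as Hdf; apply Rabs_le_between in Hdf.
    rewrite Rmin_left, Rmax_right by lra; apply Hder, Hz.
  - intros z Hz; rewrite Rmin_left, Rmax_right in Hz by lra.
    apply continuity_pt_filterlim, Hcont, Hz.
  - rewrite Hc, Rabs_mult, (Rabs_pos_eq (b - a)) by lra.
    apply Rmult_le_compat_r; [lra |]; apply Rabs_le.
    pose proof (Rmax_l (- K) (Rmin (df c) K)); pose proof (Rmin_r (df c) K).
    split; [lra | apply Rmax_lub; lra].
Qed.

Lemma eq0_of_derive_le_max (f df : R -> R) a b L :
  a <= b -> 0 <= L -> L * (b - a) < 1 ->
  (forall x, a <= x <= b -> continuous f x) ->
  (forall x, a < x < b -> is_derive f x (df x)) ->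
  (forall m, (forall s, a <= s <= b -> Rabs (f s) <= m) ->
     forall x, a < x < b -> Rabs (df x) <= L * m) ->
  f a = 0 -> forall s, a <= s <= b -> f s = 0.
Proof.
  intros Hab HL HLba Hcont Hder Hdf Hfa.
  destruct (continuity_ab_maj (fun s => Rabs (f s)) a b Hab) as [s0 [Hmax Hs0]].
  { intros s Hs; apply continuity_pt_filterlim, (continuous_comp f Rabs).
    - apply Hcont, Hs.
    - apply continuous_Rabs. }
  set (m := Rabs (f s0)) in Hmax.
  assert (Hm0 : 0 <= m) by apply Rabs_pos.
  assert (Hm : m <= L * m * (b - a)).
  { apply Rle_trans with (L * m * (s0 - a)); [| apply Rmult_le_compat_l; nra].
    unfold m at 1; replace (f s0) with (f s0 - f a) by (rewrite Hfa; ring).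
    apply (Rabs_sub_le_of_derive_bound f df); try lra.
    - intros; apply Hcont; lra.
    - intros; apply Hder; lra.
    - intros x Hx; apply Hdf; [exact Hmax | lra]. }
  assert (Hm_eq : m = 0) by nra.
  intros s Hs; pose proof (Hmax s Hs); pose proof (Rabs_pos (f s)).
  apply Rabs_eq_0; lra.
Qed.

Lemma bounded_on_of_continuous (f : R -> R) a b :
  a <= b -> (forall x, a <= x <= b -> continuous f x) ->
  exists B, forall s, a <= s <= b -> Rabs (f s) <= B.
Proof.
  intros Hab Hcont.
  destruct (continuity_ab_maj (fun s => Rabs (f s)) a b Hab) as [s0 [Hmax _]].
  { intros s Hs; apply continuity_pt_filterlim, (continuous_comp f Rabs).
    - apply Hcont, Hs.
    - apply continuous_Rabs. }
  exists (Rabs (f s0)); exact Hmax.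
Qed.

Lemma is_lim_nondecreasing_bounded (f : R -> R) a B :
  (forall x y, a <= x <= y -> f x <= f y) -> (forall x, a <= x -> f x <= B) ->
  exists l : R, is_lim f p_infty l.
Proof.
  intros Hmono HB.
  set (E := fun v => exists x, a <= x /\ v = f x).
  assert (HEb : bound E) by (exists B; intros v [x [Hx ->]]; apply HB, Hx).
  assert (HE : exists v, E v) by (exists (f a); exists a; split; [lra | reflexivity]).
  destruct (completeness E HEb HE) as [l [Hub Hlub]].
  exists l; apply is_lim_spec; intros eps; simpl.
  assert (Hx0 : exists x0, a <= x0 /\ l - eps < f x0).
  { apply NNPP; intros Hno.
    assert (Hl : is_upper_bound E (l - eps)).
    { intros v [x [Hx ->]]; apply Rnot_lt_le; intros Hlt; apply Hno; exists x; split; assumption. }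
    specialize (Hlub _ Hl); pose proof (cond_pos eps); lra. }
  destruct Hx0 as [x0 [Hx0 Hlt]].
  exists x0; intros x Hx.
  assert (f x <= l) by (apply Hub; exists x; split; [lra | reflexivity]).
  pose proof (Hmono x0 x ltac:(lra)); pose proof (cond_pos eps).
  apply Rabs_lt_between; lra.
Qed.

Lemma RInt_reflect (f : R -> R) t :
  ex_RInt f 0 t -> RInt (fun s => f (t - s)) 0 t = RInt f 0 t.
Proof.
  intros Hf; apply is_RInt_unique.
  assert (Hlin : is_RInt (fun s => scal (-1) (f (-1 * s + t))) 0 t (RInt f t 0)).
  { apply (is_RInt_comp_lin (V := R_NormedModule)).
    replace (-1 * 0 + t) with t by ring; replace (-1 * t + t) with 0 by ring.
    apply (RInt_correct (V := R_CompleteNormedModule)), ex_RInt_swap, Hf. }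
  apply (is_RInt_opp (V := R_NormedModule)) in Hlin.
  rewrite (opp_RInt_swap (V := R_CompleteNormedModule)) in Hlin by (apply ex_RInt_swap, Hf).
  revert Hlin; apply is_RInt_ext; intros s _.
  change (opp (scal (-1) ?y)) with (- (-1 * y)).
  replace (-1 * s + t) with (t - s) by ring.
  match goal with |- ?l = ?r => change (@eq R l r) end; ring.
Qed.

Lemma positive_right_of_right_continuous (f : R -> R) t :
  filterlim f (at_right t) (locally (f t)) -> 0 < f t ->
  exists d, 0 < d /\ forall s, t <= s < t + d -> 0 < f s.
Proof.
  intros Hf Hpos.
  destruct (proj1 (filterlim_locally _ _) Hf (mkposreal _ Hpos)) as [d Hd].
  exists d; split; [apply cond_pos |]; intros s Hs.
  destruct (Rle_lt_or_eq_dec t s (proj1 Hs)) as [Hts | <-]; [| exact Hpos].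
  assert (Hball : ball t d s) by (apply Rabs_lt_between'; simpl; lra).
  specialize (Hd s Hball Hts); apply Rabs_lt_between' in Hd; simpl in Hd; lra.
Qed.

Lemma le_of_continuous_le_left (f : R -> R) a t c :
  a < t -> continuous f t -> (forall s, a <= s < t -> f s <= c) -> f t <= c.
Proof.
  intros Hat Hf Hle.
  apply (closed_filterlim_loc (F := at_left t) f (fun u => u <= c)); [| | apply closed_le].
  - apply (filterlim_filter_le_1 (F := locally t)); [apply filter_le_within | exact Hf].
  - exists (mkposreal (t - a) ltac:(lra)); intros s Hs Hst.
    apply Rabs_lt_between' in Hs; simpl in Hs; apply Hle; lra.
Qed.

Lemma exists_short_step L : 0 <= L -> exists d, 0 < d <= 1 /\ L * d < 1.
Proof.
  intros HL; exists (/ (L + 1)).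
  assert (Hd : 0 < / (L + 1)) by (apply Rinv_0_lt_compat; lra).
  split; [split; [exact Hd |] |].
  - rewrite <- Rinv_1; apply Rinv_le_contravar; lra.
  - apply Rmult_lt_reg_r with (L + 1); [lra |].
    rewrite Rmult_assoc, Rinv_l by lra; lra.
Qed.

Lemma right_continuous_of_right_derivative (f : R -> R) l :
  filterlim (fun h => (f h - f 0) / h) (at_right 0) (locally l) ->
  filterlim f (at_right 0) (locally (f 0)).
Proof.
  intros Hq.
  apply filterlim_ext_loc with (fun h => plus (f 0) (mult h ((f h - f 0) / h))).
  { exists (mkposreal 1 Rlt_0_1); intros h _ Hh.
    change (f 0 + h * ((f h - f 0) / h) = f h); field; lra. }
  replace (locally (f 0)) with (locally (plus (f 0) (mult 0 l)))
    by (f_equal; change (f 0 + 0 * l = f 0); ring).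
  eapply filterlim_comp_2;
    [apply filterlim_const | | apply (filterlim_plus (K := R_AbsRing) (V := R_NormedModule))].
  eapply filterlim_comp_2; [| exact Hq | apply (filterlim_mult (K := R_AbsRing))].
  apply (filterlim_filter_le_1 (F := locally 0)); [apply filter_le_within | apply filterlim_id].
Qed.

Definition convolution (g f : R -> R) (t : R) : R := RInt (fun s => g (t - s) * f s) 0 t.

(* A solution is only specified on [[0, +oo)]; it is extended to the left by the
   constant [I 0], which keeps it continuous. *)
Definition extend_left (I : R -> R) (s : R) : R := I (Rmax s 0).

Section ExtendLeft.

Variables I I' : R -> R.
Hypothesis I_C1 : C1_on_nonneg I I'.

Lemma extend_left_eq s : 0 <= s -> extend_left I s = I s.
Proof. intros Hs; unfold extend_left; rewrite Rmax_left by exact Hs; reflexivity. Qed.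

Lemma is_derive_extend_left t : 0 < t -> is_derive (extend_left I) t (I' t).
Proof.
  intros Ht; destruct I_C1 as [Hder _].
  apply is_derive_ext_loc with I; [| apply Hder, Ht].
  exists (mkposreal t Ht); intros s Hs; apply Rabs_lt_between' in Hs; simpl in Hs.
  symmetry; apply extend_left_eq; lra.
Qed.

Lemma continuous_extend_left t : continuous (extend_left I) t.
Proof.
  destruct (Rtotal_order t 0) as [Ht | [-> | Ht]].
  - apply continuous_ext_loc with (fun _ => I 0); [| apply continuous_const].
    exists (mkposreal (- t) ltac:(lra)); intros s Hs; apply Rabs_lt_between' in Hs; simpl in Hs.
    unfold extend_left; rewrite Rmax_right by lra; reflexivity.
  - destruct I_C1 as [_ [Hq _]].
    apply filterlim_locally; intros eps; unfold extend_left at 1; rewrite Rmax_right by lra.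
    destruct (proj1 (filterlim_locally _ _) (right_continuous_of_right_derivative I _ Hq) eps)
      as [d Hd].
    exists d; intros s Hs; unfold extend_left.
    destruct (Rle_lt_dec s 0) as [Hs0 | Hs0].
    + rewrite Rmax_right by exact Hs0; apply ball_center.
    + rewrite Rmax_left by lra; apply Hd; assumption.
  - apply (ex_derive_continuous (V := R_NormedModule)).
    eexists; apply is_derive_extend_left, Ht.
Qed.

Lemma right_continuous_derivative t : 0 <= t -> filterlim I' (at_right t) (locally (I' t)).
Proof.
  intros [Ht | <-]; destruct I_C1 as [_ [_ [Hcont Hcont0]]]; [| exact Hcont0].
  apply (filterlim_filter_le_1 (F := locally t)); [apply filter_le_within | apply Hcont, Ht].
Qed.

Lemma convolution_extend_left (g : R -> R) t : 0 <= t ->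
  convolution g (extend_left I) t = convolution g I t.
Proof.
  intros Ht; apply RInt_ext; intros s Hs; rewrite Rmin_left, Rmax_right in Hs by lra.
  rewrite extend_left_eq by lra; reflexivity.
Qed.

End ExtendLeft.

Section MemoryEquation.

Variables (beta M : R) (g I I' : R -> R).
Hypothesis beta_pos : 0 < beta.
Hypothesis g_ge0 : forall s, 0 <= g s.
Hypothesis g_cont : forall s, continuous g s.
Hypothesis g_mass_lt1 : forall t, 0 <= t -> RInt g 0 t < 1.
Hypothesis I_cont : forall t, continuous I t.
Hypothesis I_derive : forall t, 0 < t -> is_derive I t (I' t).
Hypothesis I'_right_cont : forall t, 0 <= t -> filterlim I' (at_right t) (locally (I' t)).
Hypothesis I0_range : 0 <= I 0 <= M.
Hypothesis I_equation :
  forall t, 0 <= t -> I' t = beta * (M - I t) * (I t - convolution g I t).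

Lemma continuous_reflected_kernel t s : continuous (fun s => g (t - s)) s.
Proof.
  apply (continuous_comp (fun s => t - s) g); [| apply g_cont].
  continuous_by_derive; reflexivity.
Qed.

Lemma continuous_convolution_integrand t s : continuous (fun s => g (t - s) * I s) s.
Proof.
  apply (continuous_mult (fun s => g (t - s)) I);
    [apply continuous_reflected_kernel | apply I_cont].
Qed.

Lemma Rabs_convolution_le t m : 0 <= t -> (forall s, 0 <= s <= t -> Rabs (I s) <= m) ->
  Rabs (convolution g I t) <= m * RInt g 0 t.
Proof.
  intros Ht Hm.
  assert (Hex : ex_RInt (fun s => g (t - s)) 0 t)
    by apply ex_RInt_of_continuous, continuous_reflected_kernel.
  rewrite <- RInt_reflect by apply ex_RInt_of_continuous, g_cont.
  rewrite <- (RInt_scal (V := R_CompleteNormedModule)) by exact Hex.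
  eapply Rle_trans; [apply abs_RInt_le; [exact Ht |] |].
  - apply ex_RInt_of_continuous, continuous_convolution_integrand.
  - apply RInt_le; [exact Ht | | apply (ex_RInt_scal (V := R_CompleteNormedModule)), Hex |].
    + apply ex_RInt_of_continuous; intros s.
      apply (continuous_comp _ Rabs);
        [apply continuous_convolution_integrand | apply continuous_Rabs].
    + intros s Hs; rewrite Rabs_mult, (Rabs_pos_eq (g (t - s))) by apply g_ge0.
      change (scal ?a ?b) with (a * b); rewrite (Rmult_comm m).
      apply Rmult_le_compat_l; [apply g_ge0 | apply Hm; lra].
Qed.

Lemma Rabs_sub_convolution_le t m : 0 <= t -> (forall s, 0 <= s <= t -> Rabs (I s) <= m) ->
  Rabs (I t - convolution g I t) <= 2 * m.
Proof.
  intros Ht Hm.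
  pose proof (Rabs_convolution_le t m Ht Hm).
  pose proof (Hm t ltac:(lra)); pose proof (Rabs_pos (I t)); pose proof (g_mass_lt1 t Ht).
  assert (0 <= RInt g 0 t).
  { apply RInt_ge_0; [exact Ht | apply ex_RInt_of_continuous, g_cont | intros; apply g_ge0]. }
  pose proof (Rabs_triang (I t) (- convolution g I t)); rewrite Rabs_Ropp in *.
  unfold Rminus; nra.
Qed.

Lemma Rabs_derivative_le t m : 0 <= t -> (forall s, 0 <= s <= t -> Rabs (I s) <= m) ->
  Rabs (I' t) <= beta * Rabs (M - I t) * (2 * m).
Proof.
  intros Ht Hm.
  rewrite I_equation, !Rabs_mult, (Rabs_pos_eq beta) by lra.
  apply Rmult_le_compat_l; [pose proof (Rabs_pos (M - I t)); nra |].
  apply Rabs_sub_convolution_le; assumption.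
Qed.

Lemma convolution_lt t : 0 <= t -> 0 < I t -> (forall s, 0 <= s <= t -> 0 <= I s <= I t) ->
  convolution g I t < I t.
Proof.
  intros Ht HIt Hs.
  assert (Rabs (convolution g I t) <= I t * RInt g 0 t).
  { apply Rabs_convolution_le; [exact Ht |]; intros s Hs'.
    rewrite Rabs_pos_eq; apply Hs; assumption. }
  pose proof (Rle_abs (convolution g I t)); pose proof (g_mass_lt1 t Ht); nra.
Qed.

Lemma solution_bounded_on T : 0 <= T ->
  exists B, 0 <= B /\ forall s, 0 <= s <= T -> Rabs (I s) <= B.
Proof.
  intros HT; destruct (bounded_on_of_continuous I 0 T) as [B HB];
    [exact HT | intros; apply I_cont |].
  exists B; split; [| exact HB].
  pose proof (HB 0 ltac:(lra)); pose proof (Rabs_pos (I 0)); lra.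
Qed.

Lemma solution_stays_zero t : 0 <= t -> (forall s, 0 <= s <= t -> I s = 0) ->
  exists d, 0 < d /\ forall s, 0 <= s <= t + d -> I s = 0.
Proof.
  intros Ht Hzero.
  destruct (solution_bounded_on (t + 1)) as [B [HB0 HB]]; [lra |].
  set (L := 2 * beta * (Rabs M + B)).
  assert (HL : 0 <= L) by (unfold L; pose proof (Rabs_pos M); nra).
  destruct (exists_short_step L HL) as [d [Hd HLd]].
  assert (Hright : forall s, t <= s <= t + d -> I s = 0).
  { apply (eq0_of_derive_le_max I I' t (t + d) L); try lra.
    - intros; apply I_cont.
    - intros x Hx; apply I_derive; lra.
    - intros m Hm x Hx.
      assert (Hm0 : 0 <= m) by (pose proof (Hm t ltac:(lra)); pose proof (Rabs_pos (I t)); lra).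
      assert (Hm' : forall s, 0 <= s <= x -> Rabs (I s) <= m).
      { intros s Hs; destruct (Rle_lt_dec s t).
        - rewrite Hzero, Rabs_R0 by lra; exact Hm0.
        - apply Hm; lra. }
      eapply Rle_trans; [apply Rabs_derivative_le; [lra | exact Hm'] |].
      assert (Rabs (M - I x) <= Rabs M + B).
      { pose proof (Rabs_triang M (- I x)); rewrite Rabs_Ropp in *.
        pose proof (HB x ltac:(lra)); unfold Rminus; lra. }
      apply Rle_trans with (beta * (Rabs M + B) * (2 * m)); [| right; unfold L; ring].
      apply Rmult_le_compat_r; [lra | apply Rmult_le_compat_l; lra].
    - apply Hzero; lra. }
  exists d; split; [lra |]; intros s Hs.
  destruct (Rle_lt_dec s t); [apply Hzero | apply Hright]; lra.
Qed.

Lemma solution_stays_at_M t : 0 <= t -> I t = M ->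
  exists d, 0 < d /\ forall s, t <= s <= t + d -> I s = M.
Proof.
  intros Ht HtM.
  destruct (solution_bounded_on (t + 1)) as [B [HB0 HB]]; [lra |].
  set (L := 2 * beta * B).
  assert (HL : 0 <= L) by (unfold L; nra).
  destruct (exists_short_step L HL) as [d [Hd HLd]].
  assert (Hflat : forall s, t <= s <= t + d -> M - I s = 0).
  { apply (eq0_of_derive_le_max (fun s => M - I s) (fun s => - I' s) t (t + d) L); try lra.
    - intros; apply (continuous_minus (fun _ => M) I); [apply continuous_const | apply I_cont].
    - intros x Hx.
      replace (- I' x) with (minus zero (I' x)) by (unfold minus, plus, opp, zero; simpl; ring).
      apply (is_derive_minus (K := R_AbsRing) (V := R_NormedModule));
        [apply (is_derive_const (K := R_AbsRing) (V := R_NormedModule)) | apply I_derive; lra].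
    - intros m Hm x Hx; rewrite Rabs_Ropp.
      eapply Rle_trans; [apply (Rabs_derivative_le x B); [lra | intros; apply HB; lra] |].
      pose proof (Hm x ltac:(lra)) as HMx; cbv beta in HMx.
      apply Rle_trans with (beta * m * (2 * B)); [| right; unfold L; ring].
      apply Rmult_le_compat_r; [lra | apply Rmult_le_compat_l; lra]. }
  exists d; split; [lra |]; intros s Hs; specialize (Hflat s Hs); lra.
Qed.

Lemma solution_step_interior t : 0 <= t -> 0 < I t < M ->
  (forall s, 0 <= s <= t -> 0 <= I s <= I t) ->
  exists d, 0 < d /\ forall s, t <= s < t + d -> 0 <= I' s /\ I s <= M.
Proof.
  intros Ht HIt Hrange.
  assert (Hpos : 0 < I' t).
  { pose proof (convolution_lt t Ht (proj1 HIt) Hrange).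
    rewrite I_equation by exact Ht.
    apply Rmult_lt_0_compat; [apply Rmult_lt_0_compat |]; lra. }
  destruct (positive_right_of_right_continuous I' t (I'_right_cont t Ht) Hpos)
    as [d1 [Hd1 HI'pos]].
  destruct (positive_right_of_right_continuous (fun s => M - I s) t) as [d2 [Hd2 HIltM]];
    [| lra |].
  { apply (filterlim_filter_le_1 (F := locally t)); [apply filter_le_within |].
    apply (continuous_minus (fun _ => M) I); [apply continuous_const | apply I_cont]. }
  exists (Rmin d1 d2); split; [apply Rmin_pos; assumption |]; intros s Hs.
  pose proof (Rmin_l d1 d2); pose proof (Rmin_r d1 d2).
  pose proof (HI'pos s ltac:(lra)); pose proof (HIltM s ltac:(lra)); lra.
Qed.

Lemma solution_step_at_zero t : 0 <= t -> (forall s, 0 <= s <= t -> I s = 0) ->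
  exists d, 0 < d /\ forall s, t <= s < t + d -> 0 <= I' s /\ I s <= M.
Proof.
  intros Ht Hzero.
  destruct (solution_stays_zero t Ht Hzero) as [d [Hd Hd0]].
  exists d; split; [exact Hd |]; intros s Hs.
  assert (Hconv : convolution g I s = 0).
  { apply Rabs_eq_0, Rle_antisym; [| apply Rabs_pos].
    rewrite <- (Rmult_0_l (RInt g 0 s)); apply Rabs_convolution_le; [lra |].
    intros u Hu; rewrite Hd0, Rabs_R0 by lra; lra. }
  rewrite I_equation, Hd0, Hconv by lra; split; [right; ring | lra].
Qed.

Lemma solution_step t : 0 <= t -> (forall s, 0 <= s < t -> 0 <= I' s /\ I s <= M) ->
  exists d, 0 < d /\ forall s, t <= s < t + d -> 0 <= I' s /\ I s <= M.
Proof.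
  intros Ht Hbelow.
  assert (Hmono : forall x y, 0 <= x <= y -> y <= t -> I x <= I y).
  { apply (nondecreasing_of_derive_ge0 I I' 0 t).
    - intros; apply I_cont.
    - intros x Hx; apply I_derive; lra.
    - intros x Hx; apply Hbelow; lra. }
  assert (HtM : I t <= M).
  { destruct Ht as [Ht | <-]; [| lra].
    apply (le_of_continuous_le_left I 0 t M); [exact Ht | apply I_cont |].
    intros; apply Hbelow; lra. }
  assert (Hrange : forall s, 0 <= s <= t -> 0 <= I s <= I t).
  { intros s Hs; pose proof (Hmono 0 s); pose proof (Hmono s t); lra. }
  destruct (Rle_lt_or_eq_dec (I t) M HtM) as [HtM' | HtM'].
  - destruct (Rle_lt_dec (I t) 0) as [Ht0 | Ht0].
    + apply solution_step_at_zero; [exact Ht |].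
      intros s Hs; pose proof (Hrange s Hs); lra.
    + apply solution_step_interior; [exact Ht | lra | exact Hrange].
  - destruct (solution_stays_at_M t Ht HtM') as [d [Hd HdM]].
    exists d; split; [exact Hd |]; intros s Hs.
    rewrite I_equation, (HdM s) by lra; split; [right; ring | lra].
Qed.

Lemma solution_nondecreasing_le_M t : 0 <= t -> 0 <= I' t /\ I t <= M.
Proof. apply (real_induction (fun s => 0 <= I' s /\ I s <= M)), solution_step. Qed.

Lemma solution_has_limit : exists l : R, is_lim I p_infty l.
Proof.
  apply (is_lim_nondecreasing_bounded I 0 M).
  - intros x y Hxy; apply (nondecreasing_of_derive_ge0 I I' 0 y); try lra.
    + intros; apply I_cont.
    + intros z Hz; apply I_derive; lra.
    + intros z Hz; apply solution_nondecreasing_le_M; lra.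
  - intros x Hx; apply solution_nondecreasing_le_M, Hx.
Qed.

End MemoryEquation.

Theorem corollary3p7 (M beta mu sigma I0 : R) (I : R -> R) :
  0 < M -> 0 < beta -> 0 < sigma -> 0 <= I0 <= M ->
  is_solution beta M I0 (lognormal mu sigma) I ->
  exists Iinf : R, is_lim I p_infty Iinf.
Proof.
  intros _ Hbeta Hsigma HI0 [I' [HC1 [HI00 Heq]]].
  destruct (solution_has_limit beta M (lognormal mu sigma) (extend_left I) I') as [l Hl].
  - exact Hbeta.
  - apply lognormal_ge0, Hsigma.
  - apply continuous_lognormal, Hsigma.
  - apply RInt_lognormal_lt_1, Hsigma.
  - apply (continuous_extend_left I I' HC1).
  - apply (is_derive_extend_left I I' HC1).
  - apply (right_continuous_derivative I I' HC1).
  - rewrite extend_left_eq, HI00 by lra; exact HI0.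
  - intros t Ht; rewrite convolution_extend_left, extend_left_eq by exact Ht; apply Heq, Ht.
  - exists l; apply is_lim_ext_loc with (extend_left I); [| exact Hl].
    exists 0; intros t Ht; apply extend_left_eq; lra.
Qed.
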